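(* For every Halin graph $H$, $AT(H)\le 4$.
   Context: All graphs are finite and simple. A Halin graph $H=T\cup C_n$ is a plane graph obtained from a plane tree $T$ having no vertex of degree two and at least one vertex of degree at least three, by adding a cycle $C_n$ that connects all the leaves of $T$ in the cyclic order determined by the planar drawing of $T$. For a digraph $D$, an Eulerian subdigraph is a spanning subdigraph (a subset of the arcs, possibly empty) in which every vertex has indegree equal to outdegree; it is even or odd according to the parity of its number of arcs. The Alon–Tarsi number $AT(G)$ is the smallest integer $k$ such that $G$ has an orientation $D$ with maximum outdegree at most $k-1$ for which the numbers of even and odd Eulerian subdigraphs of $D$ differ. *)

From mathcomp Require Import all_boot.
Set Implicit Arguments. Unset Strict Implicit. Unset Printing Implicit Defensive.

(* Graphs: a relation e on a finType V (simple graph = symmetric, irreflexive). *)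

Definition deg (V : finType) (t : rel V) (v : V) : nat := #|[set u | t v u]|.

Definition leaf (V : finType) (t : rel V) (v : V) : bool := deg t v == 1.

(* t is a tree on all of V: symmetric, irreflexive, connected, and with
   exactly #|V| - 1 edges (each edge counted as two ordered pairs). *)
Definition is_tree (V : finType) (t : rel V) : Prop :=
  [/\ symmetric t, irreflexive t,
      (forall x y, connect t x y) &
      #|[set p : V * V | t p.1 p.2]| = 2 * (#|V| - 1)].

(* A rotation system of t (= a plane embedding of the tree t):
   for each vertex v, rot v is a cyclic permutation of the neighbourhood of v. *)
Definition is_rotation (V : finType) (t : rel V) (rot : V -> V -> V) : Prop :=
  forall v, (forall u, t v u -> t v (rot v u)) /\
            (forall u w, t v u -> t v w -> exists k, iter k (rot v) u = w).

Definition face_next (V : finType) (rot : V -> V -> V) (d : V * V) : V * V :=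
  (d.2, rot d.2 d.1).

(* l' is the leaf following the leaf l in the cyclic order of leaves determined
   by the plane tree (t, rot): walking around the boundary of the unique face
   starting from the dart leaving l, l' is the first leaf reached. *)
Definition next_leaf (V : finType) (t : rel V) (rot : V -> V -> V) (l l' : V) : Prop :=
  [/\ leaf t l, leaf t l' &
      exists y k, [/\ t l y,
        (iter k (face_next rot) (l, y)).2 = l' &
        forall j, j < k -> ~~ leaf t (iter j (face_next rot) (l, y)).2]].

(* e is (the edge relation of) a Halin graph T \cup C: T a plane tree with no
   vertex of degree 2 and some vertex of degree >= 3, C the cycle through the
   leaves of T in the cyclic order given by the plane drawing. *)
Definition is_halin (V : finType) (e : rel V) : Prop :=
  exists (t : rel V) (rot : V -> V -> V),
    [/\ is_tree t, is_rotation t rot,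
        (forall v, deg t v != 2),
        (exists v, 3 <= deg t v) &
        forall x y, e x y <-> (t x y \/ next_leaf t rot x y \/ next_leaf t rot y x)].

Definition is_orientation (V : finType) (e : rel V) (D : {set V * V}) : bool :=
  [forall x, forall y, ((x, y) \in D) ==> e x y] &&
  [forall x, forall y, e x y ==> (((x, y) \in D) (+) ((y, x) \in D))].

Definition outdeg (V : finType) (D : {set V * V}) (v : V) : nat :=
  #|[set y | (v, y) \in D]|.
Definition indeg (V : finType) (D : {set V * V}) (v : V) : nat :=
  #|[set y | (y, v) \in D]|.

Definition eulerian (V : finType) (D A : {set V * V}) : bool :=
  (A \subset D) && [forall v, outdeg A v == indeg A v].

Definition n_even_eulerian (V : finType) (D : {set V * V}) : nat :=
  #|[set A : {set V * V} | eulerian D A & ~~ odd #|A|]|.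
Definition n_odd_eulerian (V : finType) (D : {set V * V}) : nat :=
  #|[set A : {set V * V} | eulerian D A & odd #|A|]|.

Definition AT_ok (V : finType) (e : rel V) (k : nat) : bool :=
  [exists D : {set V * V},
     [&& is_orientation e D, [forall v, outdeg D v < k] &
         n_even_eulerian D != n_odd_eulerian D]].

(* An acyclic orientation has
   max outdegree <= #|V| - 1 and exactly one (empty, even) Eulerian
   subdigraph, so k = #|V| is always admissible; hence the minimum over
   k <= #|V| + 1 below is the true minimum. *)
Definition AT (V : finType) (e : rel V) : nat :=
  \big[minn/#|V|.+1]_(k < #|V|.+2 | AT_ok e k) k.

From mathcomp Require Import all_boot.
Set Implicit Arguments. Unset Strict Implicit. Unset Printing Implicit Defensive.

(* A Halin graph is 3-degenerate.  Root the tree T anywhere and rank its vertices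
   so that every vertex has at most one tree neighbour of smaller rank (its
   parent).  A vertex of T that is not a leaf has only tree neighbours in H, and
   a leaf has at most three neighbours in H: its tree neighbour and its two
   neighbours on the cycle.  Orienting every edge towards its endpoint of smaller
   rank thus gives an acyclic orientation of maximum outdegree at most 3, whose
   only Eulerian subdigraph is the empty (even) one, so AT(H) <= 4.
   The delicate point is that the cycle has no loop: the boundary walk of the
   plane tree starting at a leaf l meets another leaf before returning to l,
   since otherwise a vertex of maximal rank on the walk would be entered and
   left through its parent, which makes it a leaf. *)

Section RootedTree.
Variables (V : finType) (t : rel V).

Lemma connect_exit (s : seq V) x y : x \in s -> y \notin s -> connect t x y ->
  exists a b, [/\ a \in s, b \notin s & t a b].
Proof.
move=> xs ys /connectP [q]; elim: q x xs => [|z q IH] x xs /=.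
  by move=> _ yx; move: ys; rewrite yx xs.
case/andP=> txz q_path y_last; have [zs|zs] := boolP (z \in s).
  exact: IH zs q_path y_last.
by exists x, z.
Qed.

Lemma connected_parent_seq r n : symmetric t -> (forall x y, connect t x y) ->
  n < #|V| ->
  exists (s : seq V) (p : V -> V), [/\ uniq s, size s = n.+1, index r s = 0 &
    forall u, u \in s -> u != r -> t u (p u) /\ index (p u) s < index u s].
Proof.
move=> t_sym t_conn; elim: n => [_|n IH lt_nV].
  exists [:: r], id; split=> //=; first by rewrite eqxx.
  by move=> u; rewrite inE => ->.
have [s [p [s_uniq s_size s_r s_parent]]] := IH (ltnW lt_nV).
have [y ys] : exists y, y \notin s.
  apply/existsP; rewrite -negb_forall; apply: contraTN lt_nV => /forallP all_s.
  rewrite -leqNgt -s_size (leq_trans _ (card_size s)) //.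
  by apply/subset_leq_card/subsetP => x _.
have rs : r \in s by rewrite -index_mem s_r s_size.
have [x [z [xs zs txz]]] := connect_exit rs ys (t_conn r y).
have index_ext u : u \in s -> index u (rcons s z) = index u s.
  by move=> us; rewrite -cats1 index_cat us.
have index_z : index z (rcons s z) = size s.
  by rewrite -cats1 index_cat (negbTE zs) /= eqxx addn0.
exists (rcons s z), (fun u => if u == z then x else p u); split.
- by rewrite rcons_uniq zs s_uniq.
- by rewrite size_rcons s_size.
- by rewrite index_ext.
move=> u; rewrite mem_rcons inE => /predU1P [->|us] ur.
  by rewrite eqxx t_sym index_z index_ext // index_mem.
have [tup lt_pu] := s_parent u us ur.
have pus : p u \in s by rewrite -index_mem (ltn_trans lt_pu) ?index_mem.
by rewrite ifN ?index_ext //; apply: contraNneq zs => <-.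
Qed.

Lemma tree_parent_ranking r : is_tree t -> exists (rk : V -> nat) (p : V -> V),
  [/\ injective rk, rk r = 0 & forall u, u != r -> t u (p u) /\ rk (p u) < rk u].
Proof.
case=> t_sym _ t_conn _.
have [|s [p [s_uniq s_size s_r s_parent]]] :=
  connected_parent_seq (n := #|V|.-1) r t_sym t_conn.
  by rewrite prednK //; apply/card_gt0P; exists r.
have all_s u : u \in s.
  have card_s : #|s| = #|predT : pred V|.
    by rewrite (card_uniqP s_uniq) s_size prednK //; apply/card_gt0P; exists r.
  by rewrite (elimT (subset_cardP card_s) (subset_predT _)).
exists (index^~ s), p; split=> // [u v|u]; last exact: s_parent.
exact: index_inj.
Qed.

(* The #|V| - 1 parent edges, taken in both directions, already give all the
   2 (#|V| - 1) darts of the tree. *)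
Lemma tree_edge_parent r (rk : V -> nat) (p : V -> V) : is_tree t -> injective rk ->
    (forall u, u != r -> t u (p u) /\ rk (p u) < rk u) ->
  forall v a, t v a -> rk a < rk v -> a = p v.
Proof.
case=> t_sym _ _ card_edges rk_inj p_parent v a tva lt_av.
pose up := [set (u, p u) | u in [set~ r]].
pose down := [set (p u, u) | u in [set~ r]].
have card_up : #|up| = #|V| - 1.
  by rewrite card_imset ?cardsC1 ?subn1 // => ? ? [].
have card_down : #|down| = #|V| - 1.
  by rewrite card_imset ?cardsC1 ?subn1 // => ? ? [].
have up_down0 : up :&: down = set0.
  apply/setP=> d; rewrite inE in_set0.
  apply/negP=> /andP [/imsetP [u ur ->] /imsetP [w wr [uw puw]]].
  rewrite !inE in ur wr.
  have := (p_parent u ur).2; rewrite puw uw => lt_w_pw.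
  by have := ltn_trans lt_w_pw (p_parent w wr).2; rewrite ltnn.
have edges_eq : up :|: down = [set d | t d.1 d.2].
  apply/eqP; rewrite eqEcard cardsU up_down0 cards0 subn0 card_up card_down.
  rewrite card_edges addnn -mul2n leqnn andbT.
  apply/subsetP=> d; rewrite !inE => /orP [] /imsetP [u ur ->] /=; rewrite !inE in ur.
    exact: (p_parent u ur).1.
  by rewrite t_sym (p_parent u ur).1.
have : (v, a) \in up :|: down by rewrite edges_eq inE.
rewrite inE => /orP [] /imsetP [u ur [vu au]]; first by rewrite vu au.
rewrite !inE in ur; move: lt_av; rewrite vu au => lt_u_pu.
by have := ltn_trans lt_u_pu (p_parent u ur).2; rewrite ltnn.
Qed.

Definition lower_nbr_uniq (rk : V -> nat) :=
  forall v a b, t v a -> t v b -> rk a < rk v -> rk b < rk v -> a = b.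

Lemma tree_ranking r : is_tree t ->
  exists rk : V -> nat, [/\ injective rk, forall u, rk r <= rk u & lower_nbr_uniq rk].
Proof.
move=> t_tree; have [rk [p [rk_inj rk_r p_parent]]] := tree_parent_ranking r t_tree.
have parent_edge := tree_edge_parent t_tree rk_inj p_parent.
exists rk; split=> // [u|v a b tva tvb lt_av lt_bv]; first by rewrite rk_r.
by rewrite (parent_edge _ _ tva lt_av) (parent_edge _ _ tvb lt_bv).
Qed.

End RootedTree.

Section FaceWalk.
Variables (V : finType) (t : rel V) (rot : V -> V -> V).
Hypotheses (t_tree : is_tree t) (t_rot : is_rotation t rot).

Let t_sym : symmetric t. Proof. by case: t_tree. Qed.
Let t_irr : irreflexive t. Proof. by case: t_tree. Qed.

Lemma leaf_nbr_uniq l a b : leaf t l -> t l a -> t l b -> a = b.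
Proof.
move=> /cards1P [x nbr_l] tla tlb.
have : a \in [set u | t l u] by rewrite inE.
have : b \in [set u | t l u] by rewrite inE.
by rewrite nbr_l !inE => /eqP-> /eqP->.
Qed.

Lemma rot_nbr v u : t v u -> t v (rot v u).
Proof. exact: (t_rot v).1. Qed.

Lemma iter_rot_nbr v u n : t v u -> t v (iter n (rot v) u).
Proof. by move=> tvu; elim: n => //= n; apply: rot_nbr. Qed.

Lemma rot_inj v : {in [set u | t v u] &, injective (rot v)}.
Proof.
apply/imset_injP; rewrite eqn_leq subset_leq_card //=; last first.
  by apply/subsetP=> w /imsetP [u]; rewrite !inE => tvu ->; apply: rot_nbr.
apply/subset_leq_card/subsetP=> w; rewrite inE => tvw.
have [k <-] := (t_rot v).2 _ _ (rot_nbr tvw) tvw.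
by apply/imsetP; exists (iter k (rot v) w); rewrite ?inE ?iter_rot_nbr // -iterS iterSr.
Qed.

Lemma rot_fixed_leaf v x : t v x -> rot v x = x -> leaf t v.
Proof.
move=> tvx rot_x; apply/cards1P; exists x; apply/setP=> u; rewrite !inE.
apply/idP/eqP=> [tvu|->//]; have [k <-] := (t_rot v).2 _ _ tvx tvu.
by elim: k => //= k ->.
Qed.

Lemma nbr_rank_lt (rk : V -> nat) a b :
  injective rk -> t a b -> rk a <= rk b -> rk a < rk b.
Proof.
move=> rk_inj tab; rewrite leq_eqVlt => /predU1P [/rk_inj eq_ab|//].
by rewrite eq_ab t_irr in tab.
Qed.

Local Notation F := (face_next rot).

Definition dart (d : V * V) := t d.1 d.2.

(* The head [(iter j F d).2] of the j-th dart, as used in [next_leaf], is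
   convertible to [face_walk d j.+1]. *)
Definition face_walk d j := (iter j F d).1.

Lemma face_next_dart d : dart d -> dart (F d).
Proof. by rewrite /dart /= t_sym; apply: rot_nbr. Qed.

Lemma iter_face_next_dart k d : dart d -> dart (iter k F d).
Proof. by move=> dd; elim: k => //= k; apply: face_next_dart. Qed.

Lemma face_walk_nbr d j : dart d -> t (face_walk d j) (face_walk d j.+1).
Proof. exact: iter_face_next_dart. Qed.

Lemma face_next_inj d1 d2 : dart d1 -> dart d2 -> F d1 = F d2 -> d1 = d2.
Proof.
move: d1 d2 => [a1 b1] [a2 b2]; rewrite /dart /= => tab1 tab2 [eq_b].
rewrite -{b2}eq_b in tab2 * => rot_eq.
by congr pair; apply: (@rot_inj b1); rewrite ?inE 1?t_sym.
Qed.

Lemma leaf_walk_inj k1 k2 d1 d2 : dart d1 -> dart d2 ->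
    leaf t d1.1 -> leaf t d2.1 ->
    (forall j, j < k1 -> ~~ leaf t (iter j F d1).2) ->
    (forall j, j < k2 -> ~~ leaf t (iter j F d2).2) ->
  iter k1 F d1 = iter k2 F d2 -> d1 = d2.
Proof.
move=> dd1 dd2 leaf1 leaf2; elim: k1 k2 => [|k1 IH] [|k2] //= inner1 inner2.
- by move=> walk_eq; have := inner2 k2 (ltnSn _); move: leaf1; rewrite walk_eq => ->.
- by move=> walk_eq; have := inner1 k1 (ltnSn _); move: leaf2; rewrite -walk_eq => ->.
move/face_next_inj => walk_eq; apply: (IH k2).
- by move=> j lt_jk; apply/inner1/ltnW.
- by move=> j lt_jk; apply/inner2/ltnW.
by apply: walk_eq; apply: iter_face_next_dart.
Qed.

Lemma next_leaf_fun l u1 u2 : next_leaf t rot l u1 -> next_leaf t rot l u2 -> u1 = u2.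
Proof.
move=> [l_leaf leaf1 [y1 [k1 [ty1 walk1 inner1]]]].
move=> [_ leaf2 [y2 [k2 [ty2 walk2 inner2]]]].
rewrite -(leaf_nbr_uniq l_leaf ty1 ty2) in walk2 inner2.
have [lt_k|lt_k|eq_k] := ltngtP k1 k2; last by rewrite -walk1 -walk2 eq_k.
  by have := inner2 _ lt_k; rewrite walk1 leaf1.
by have := inner1 _ lt_k; rewrite walk2 leaf2.
Qed.

Lemma next_leaf_inj l u1 u2 : next_leaf t rot u1 l -> next_leaf t rot u2 l -> u1 = u2.
Proof.
move=> [leaf1 l_leaf [y1 [k1 [ty1 walk1 inner1]]]].
move=> [leaf2 _ [y2 [k2 [ty2 walk2 inner2]]]].
suff [] : (u1, y1) = (u2, y2) by [].
have dd1 : dart (u1, y1) := ty1; have dd2 : dart (u2, y2) := ty2.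
apply: (leaf_walk_inj dd1 dd2 leaf1 leaf2 inner1 inner2).
have := iter_face_next_dart k1 dd1; have := iter_face_next_dart k2 dd2.
rewrite /dart; case: (iter k1 F _) walk1 => a1 b1 /= ->.
case: (iter k2 F _) walk2 => a2 b2 /= -> ta2 ta1.
by rewrite (leaf_nbr_uniq l_leaf (_ : t l a1) (_ : t l a2)) // t_sym.
Qed.

Section Ranked.
Variable rk : V -> nat.
Hypotheses (rk_inj : injective rk) (rk_lower : lower_nbr_uniq t rk).

Lemma face_walk_peak_leaf d i : dart d ->
    rk (face_walk d i) <= rk (face_walk d i.+1) ->
    rk (face_walk d i.+2) <= rk (face_walk d i.+1) ->
  leaf t (face_walk d i.+1).
Proof.
move=> dd; set x := face_walk d i; set w := face_walk d i.+1 => le_xw.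
have -> : face_walk d i.+2 = rot w x by [].
move=> le_zw; have twx : t w x by rewrite t_sym face_walk_nbr.
have twz : t w (rot w x) by apply: rot_nbr.
apply: (rot_fixed_leaf twx); apply: (rk_lower twz twx).
  by apply: nbr_rank_lt le_zw; rewrite // t_sym.
by apply: nbr_rank_lt le_xw; rewrite // t_sym.
Qed.

(* A vertex of maximal rank on the walk other than y and l would be a peak. *)
Lemma leaf_face_walk_rank_le l y k : leaf t l -> t l y ->
    face_walk (l, y) k.+1 = l ->
    (forall j, j < k -> ~~ leaf t (face_walk (l, y) j.+1)) ->
  forall j, j <= k.+1 -> face_walk (l, y) j != l -> rk (face_walk (l, y) j) <= rk y.
Proof.
move=> l_leaf tly walk_l inner j0 j0_le j0_nl.
pose h := face_walk (l, y).
have [[j lt_j] /= hj_nl j_max] :=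
  @arg_maxnP _ (Ordinal (j0_le : j0 < k.+2)) (fun j : 'I_k.+2 => h j != l)
    (fun j => rk (h j)) j0_nl.
apply: leq_trans (j_max (Ordinal (j0_le : j0 < k.+2)) j0_nl) _.
have [->//|hj_ny] := eqVneq (h j) y.
case: j lt_j hj_nl j_max hj_ny => [|i] lt_i hj_nl j_max hj_ny.
  by rewrite eqxx in hj_nl.
have lt_ik : i < k.
  rewrite -ltnS ltn_neqAle -ltnS lt_i andbT.
  by apply: contraNneq hj_nl => ->; apply/eqP.
have nbr_nl a : t (h i.+1) a -> a != l.
  move=> ta; apply: contraNneq hj_ny => al; apply/eqP.
  by apply: (leaf_nbr_uniq l_leaf _ tly); rewrite -al t_sym.
have prev_nl : h i != l by apply: nbr_nl; rewrite t_sym face_walk_nbr.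
have next_nl : h i.+2 != l by apply/nbr_nl/face_walk_nbr.
have := face_walk_peak_leaf (tly : dart (l, y))
  (j_max (Ordinal (ltnW lt_i : i < k.+2)) prev_nl)
  (j_max (Ordinal (lt_ik : i.+2 < k.+2)) next_nl).
by rewrite (negbTE (inner i lt_ik)).
Qed.

End Ranked.

(* Ranking the tree from y, the vertex [rot y l] following y on the walk must be
   l, which makes y a leaf. *)
Lemma next_leaf_irrefl l : ~ next_leaf t rot l l.
Proof.
move=> [l_leaf _ [y [k [tly walk_l inner]]]].
have [rk [rk_inj rk_y rk_lower]] := tree_ranking y t_tree.
have k_gt0 : 0 < k by case: k walk_l {inner} => //= yl; rewrite yl t_irr in tly.
have rot_l : rot y l = l.
  apply/eqP; apply: contraT => h2_nl.
  have := leaf_face_walk_rank_le rk_inj rk_lower l_leaf tly walk_l inner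
    (k_gt0 : 2 <= k.+1) h2_nl.
  have dd : dart (l, y) := tly.
  by rewrite leqNgt (nbr_rank_lt rk_inj (face_walk_nbr 1 dd) (rk_y _)).
have := inner 0 k_gt0; rewrite /face_walk /=.
by rewrite (rot_fixed_leaf _ rot_l) // t_sym.
Qed.

End FaceWalk.

Lemma card_le2_functional (T : finType) (A : {set T}) (P Q : T -> Prop) :
    (forall a, a \in A -> P a \/ Q a) ->
    (forall a b, P a -> P b -> a = b) -> (forall a b, Q a -> Q b -> a = b) ->
  #|A| <= 2.
Proof.
move=> PQ_A; have [->|[a aA]] := set_0Vmem A; first by rewrite cards0.
wlog Pa : P Q PQ_A / P a.
  move=> wlog_P P_fun Q_fun; have [Pa|Qa] := PQ_A a aA; first exact: (wlog_P P Q).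
  by apply: (wlog_P Q P) => // u /PQ_A [Pu|Qu]; [right|left].
move=> P_fun Q_fun.
rewrite (cardsD1 a A) aA ltnS; apply/card_le1_eqP=> u v.
have Q_rest w : w \in A :\ a -> Q w.
  rewrite !inE => /andP [wa /PQ_A [Pw|//]].
  by rewrite (P_fun _ _ Pw Pa) eqxx in wa.
by move=> /Q_rest Qu /Q_rest Qv; apply: Q_fun.
Qed.

Section Halin.
Variables (V : finType) (e t : rel V) (rot : V -> V -> V).
Hypotheses (t_tree : is_tree t) (t_rot : is_rotation t rot).
Hypothesis e_halin :
  forall x y, e x y <-> (t x y \/ next_leaf t rot x y \/ next_leaf t rot y x).

Lemma halin_sym : symmetric e.
Proof.
have [t_sym _ _ _] := t_tree.
move=> x y; apply/idP/idP=> /e_halin exy; apply/e_halin; rewrite t_sym;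
  by case: exy => [|[]]; auto.
Qed.

Lemma halin_irrefl : irreflexive e.
Proof.
have [_ t_irr _ _] := t_tree.
move=> x; apply/negP=> /e_halin [|[]]; first by rewrite t_irr.
  exact: next_leaf_irrefl.
exact: next_leaf_irrefl.
Qed.

Lemma halin_nonleaf_nbr v u : ~~ leaf t v -> e v u -> t v u.
Proof.
by move=> v_nl /e_halin [//|[[v_leaf _ _]|[_ v_leaf _]]]; rewrite v_leaf in v_nl.
Qed.

Lemma halin_leaf_deg l : leaf t l -> #|[set u | e l u]| <= 3.
Proof.
move=> l_leaf.
have split_nbrs :
    [set u | e l u] \subset [set u | t l u] :|: [set u | e l u && ~~ t l u].
  by apply/subsetP=> u; rewrite !inE; case: (t l u) => //= ->.
apply: leq_trans (subset_leq_card split_nbrs) _.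
apply: leq_trans (leq_card_setU _ _) _; rewrite [#|_|](eqP l_leaf).
apply: (@card_le2_functional _ _ (next_leaf t rot l) (next_leaf t rot ^~ l)).
- move=> u; rewrite inE => /andP [/e_halin [tlu|//] ]; by rewrite tlu.
- exact: next_leaf_fun.
- exact: next_leaf_inj.
Qed.

Lemma halin_lower_nbr_card (rk : V -> nat) v :
  lower_nbr_uniq t rk -> #|[set u | e v u & rk u < rk v]| <= 3.
Proof.
move=> rk_lower; have [v_leaf|v_nl] := boolP (leaf t v).
  apply: leq_trans (halin_leaf_deg v_leaf).
  by apply/subset_leq_card/subsetP=> u; rewrite !inE => /andP [].
apply: (@leq_trans 1) => //; apply/card_le1_eqP=> a b; rewrite !inE.
move=> /andP [/(halin_nonleaf_nbr v_nl) tva lt_av].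
move=> /andP [/(halin_nonleaf_nbr v_nl) tvb lt_bv].
exact: (rk_lower v b a tvb tva lt_bv lt_av).
Qed.

End Halin.

Lemma bigminn_le_cond (I : finType) (P : pred I) (F : I -> nat) x0 i0 :
  P i0 -> \big[minn/x0]_(i | P i) F i <= F i0.
Proof.
move=> P_i0; have := mem_index_enum i0; elim: (index_enum I) => // i s IH.
rewrite inE big_cons => /predU1P [<-|/IH le_min]; first by rewrite P_i0 geq_minl.
by case: ifP => // _; apply: leq_trans (geq_minr _ _) le_min.
Qed.

Section Eulerian.
Variables (V : finType) (rk : V -> nat).

Lemma eulerian_descending (D A : {set V * V}) :
  (forall d, d \in D -> rk d.2 < rk d.1) -> eulerian D A -> A = set0.
Proof.
move=> D_desc /andP [AD /forallP balanced].
apply/eqP/negPn/negP => /set0Pn [a0 a0A].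
have [[v w] vwA top] := arg_maxnP (fun d : V * V => rk d.1) a0A.
have no_in : [set u | (u, v) \in A] = set0.
  apply/setP=> u; rewrite !inE; apply/negP=> uvA.
  have := leq_trans (D_desc _ (subsetP AD _ uvA)) (top _ uvA).
  by rewrite ltnn.
have := balanced v; rewrite /outdeg /indeg no_in cards0 cards_eq0.
by move=> /eqP/setP/(_ w); rewrite !inE => /negbT/negP; apply.
Qed.

Lemma n_even_eulerian_descending (D : {set V * V}) :
  (forall d, d \in D -> rk d.2 < rk d.1) -> n_even_eulerian D = 1.
Proof.
move=> D_desc; rewrite -(cards1 (set0 : {set V * V})); apply: eq_card => A.
rewrite !inE; apply/andP/eqP=> [[/(eulerian_descending D_desc)]//|->].
split; rewrite ?cards0 // /eulerian sub0set.
by apply/forallP=> v; rewrite /outdeg /indeg; apply/eqP/eq_card=> u; rewrite !inE.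
Qed.

Lemma n_odd_eulerian_descending (D : {set V * V}) :
  (forall d, d \in D -> rk d.2 < rk d.1) -> n_odd_eulerian D = 0.
Proof.
move=> D_desc; apply/eqP; rewrite cards_eq0; apply/eqP/setP=> A; rewrite !inE.
by apply/negP=> /andP [/(eulerian_descending D_desc) ->]; rewrite cards0.
Qed.

End Eulerian.

Section Degeneracy.
Variables (V : finType) (e : rel V).

Lemma AT_le k : AT_ok e k -> AT e <= k.
Proof.
move=> ok_k; rewrite /AT; have [lt_k|ge_k] := ltnP k #|V|.+2.
  exact: (@bigminn_le_cond _ (fun i : 'I_#|V|.+2 => AT_ok e i) (fun i => i) _
           (Ordinal lt_k)).
apply: leq_trans ge_k; elim/big_ind: _ => // [x y le_x _|i _].
  exact: leq_trans (geq_minl x y) le_x.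
by rewrite ltnW.
Qed.

Definition rank_orientation (rk : V -> nat) : {set V * V} :=
  [set d | e d.1 d.2 & rk d.2 < rk d.1].

Lemma is_orientation_rank (rk : V -> nat) : symmetric e -> irreflexive e ->
  injective rk -> is_orientation e (rank_orientation rk).
Proof.
move=> e_sym e_irr rk_inj.
apply/andP; split; apply/forallP=> x; apply/forallP=> y; apply/implyP.
  by rewrite inE => /andP [].
move=> exy; rewrite !inE /= exy e_sym exy /=.
have [//|//|/rk_inj eq_xy] := ltngtP (rk y) (rk x).
by rewrite eq_xy e_irr in exy.
Qed.

Lemma outdeg_rank_orientation (rk : V -> nat) v :
  outdeg (rank_orientation rk) v = #|[set u | e v u & rk u < rk v]|.
Proof. by apply: eq_card=> u; rewrite !inE. Qed.

Theorem AT_le_ranking (rk : V -> nat) k :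
    symmetric e -> irreflexive e -> injective rk ->
    (forall v, #|[set u | e v u & rk u < rk v]| < k) ->
  AT e <= k.
Proof.
move=> e_sym e_irr rk_inj lower_deg; apply: AT_le; apply/existsP.
have D_desc d : d \in rank_orientation rk -> rk d.2 < rk d.1.
  by rewrite inE => /andP [].
exists (rank_orientation rk); rewrite is_orientation_rank //=.
rewrite (n_even_eulerian_descending D_desc) (n_odd_eulerian_descending D_desc) andbT.
by apply/forallP=> v; rewrite outdeg_rank_orientation.
Qed.

End Degeneracy.

Theorem lemma3p2 (V : finType) (e : rel V) : is_halin e -> AT e <= 4.
Proof.
(* The vertex of degree at least 3 only serves as a root. *)
move=> [t [rot [t_tree t_rot _ [r _] e_halin]]].
have [rk [rk_inj _ rk_lower]] := tree_ranking r t_tree.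
have e_sym := halin_sym t_tree e_halin.
have e_irr := halin_irrefl t_tree t_rot e_halin.
apply: (AT_le_ranking e_sym e_irr rk_inj) => v.
exact: halin_lower_nbr_card t_tree t_rot e_halin rk v rk_lower.
Qed.
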